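(* Let $\mathcal{P}$ be a profile of unrooted phylogenetic trees whose display graph $G(\mathcal{P})$ is connected. Let $F$ be any minimal separator of $\mathrm{LG}(\mathcal{P})$ and let $u$ be any vertex of any input tree. Then $\mathrm{Inc}(u)\not\subseteq F$.
   Context: A phylogenetic tree is an unrooted tree whose leaves are bijectively labeled (leaves identified with labels; internal vertices have degree at least three). A profile $\mathcal{P}=\{T_1,\dots,T_k\}$ is a finite collection of phylogenetic trees (the input trees); internal vertices of distinct trees are disjoint, while leaves with the same label are the same vertex. The display graph $G(\mathcal{P})$ has vertex set $\bigcup_i V(T_i)$ and edge set $\bigcup_i E(T_i)$. $\mathrm{LG}(\mathcal{P})$ is the line graph of $G(\mathcal{P})$ (vertices are edges of $G(\mathcal{P})$, adjacent iff they share an endpoint). For a vertex $u$ of an input tree, $\mathrm{Inc}(u)$ is the set of edges of $G(\mathcal{P})$ incident with $u$, i.e., the set of vertices $e$ of $\mathrm{LG}(\mathcal{P})$ with $u\in e$. In a graph $G$, for nonadjacent vertices $a,b$, an $a$-$b$ separator is $U\subset V(G)$ with $a,b$ in different components of $G-U$; it is minimal if no proper subset is an $a$-$b$ separator; a minimal separator is a minimal $a$-$b$ separator for some nonadjacent $a,b$. *)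

(* finite graphs as symmetric irreflexive relations on a finType. *)
From mathcomp Require Import all_boot.
Set Implicit Arguments. Unset Strict Implicit. Unset Printing Implicit Defensive.

Section Phylo.
Variable V : finType. (* ambient type containing all vertices of all input trees *)

Definition deg (E : rel V) (x : V) : nat := #|[set y | E x y]|.

(* leaves: vertices of degree at most one (degree 0 only for a one-vertex tree) *)
Definition leaf (E : rel V) (x : V) : bool := deg E x <= 1.

(* A phylogenetic tree with vertex set Vt and edge relation E:
   a simple, nonempty, connected, acyclic graph on Vt whose
   internal (non-leaf) vertices have degree at least 3. *)
Definition is_phylo_tree (Vt : {set V}) (E : rel V) : Prop :=
  [/\ symmetric E, irreflexive E,
      (forall x y, E x y -> (x \in Vt) && (y \in Vt)) & Vt != set0] /\
  [/\ {in Vt &, forall x y, connect E x y},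
      (forall c : seq V, ucycle E c -> size c < 3) &
      {in Vt, forall x, ~~ leaf E x -> 3 <= deg E x}].

(* A profile of k trees: tree i has vertex set Vt i and edges E i.
   Vertices shared by distinct trees are leaves (labels) in both;
   internal vertices of distinct trees are disjoint. *)
Definition is_profile (k : nat) (Vt : 'I_k -> {set V}) (E : 'I_k -> rel V) : Prop :=
  (forall i, is_phylo_tree (Vt i) (E i)) /\
  (forall i j x, i != j -> x \in Vt i -> x \in Vt j -> leaf (E i) x && leaf (E j) x).

Definition dg_vert (k : nat) (Vt : 'I_k -> {set V}) : {set V} := \bigcup_i Vt i.
Definition dg_adj (k : nat) (E : 'I_k -> rel V) : rel V :=
  fun x y => [exists i, E i x y].

Definition dg_connected (k : nat) (Vt : 'I_k -> {set V}) (E : 'I_k -> rel V) : Prop :=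
  {in dg_vert Vt &, forall x y, connect (dg_adj E) x y}.

Definition dg_edges (k : nat) (E : 'I_k -> rel V) : {set {set V}} :=
  [set e | [exists x, exists y, dg_adj E x y && (e == [set x; y])]].

Definition lg_adj (k : nat) (E : 'I_k -> rel V) : rel {set V} :=
  fun e f => [&& e \in dg_edges E, f \in dg_edges E, e != f & e :&: f != set0].

Definition lg_separator (k : nat) (E : 'I_k -> rel V) (a b : {set V})
    (U : {set {set V}}) : Prop :=
  [/\ U \subset dg_edges E, a \notin U, b \notin U &
      ~~ connect (fun e f => [&& lg_adj E e f, e \notin U & f \notin U]) a b].

Definition lg_min_separator_ab (k : nat) (E : 'I_k -> rel V) (a b : {set V})
    (U : {set {set V}}) : Prop :=
  lg_separator E a b U /\ (forall U' : {set {set V}}, U' \proper U -> ~ lg_separator E a b U').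

Definition lg_min_separator (k : nat) (E : 'I_k -> rel V) (F : {set {set V}}) : Prop :=
  exists a b, [/\ a \in dg_edges E, b \in dg_edges E, a != b, ~~ lg_adj E a b &
                  lg_min_separator_ab E a b F].

Definition Inc (k : nat) (E : 'I_k -> rel V) (u : V) : {set {set V}} :=
  [set e in dg_edges E | u \in e].

End Phylo.

(* Pick an edge f = uz of G(P), which lies in Inc(u) and hence in the minimal
   separator F.  By minimality, F minus f no longer separates a from b, so some
   a-b path in LG(P) avoiding F \ f passes through f.  Every edge outside F that
   meets f avoids u (as Inc(u) is inside F), hence contains z; so the edges
   outside F around f form a clique and the path can bypass f, contradicting
   that F separates a from b. *)
From mathcomp Require Import all_boot.

Set Implicit Arguments. Unset Strict Implicit. Unset Printing Implicit Defensive.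

Definition avoid_rel (T : finType) (r : rel T) (U : {set T}) : rel T :=
  fun x y => [&& r x y, x \notin U & y \notin U].

Section BypassClique.
Variables (T : finType) (r : rel T) (F : {set T}) (f : T).
Hypotheses (r_sym : symmetric r) (fF : f \in F).
Hypothesis nbhd_clique : forall g h, g \notin F -> h \notin F ->
  r g f -> r h f -> g != h -> r g h.

(* The path may enter f from g; then g is joined to whatever it leaves f for. *)
Lemma avoid_path_bypass (p : seq T) (x g : T) :
  g \notin F -> x = g \/ x = f /\ r g f ->
  path (avoid_rel r (F :\ f)) x p -> last x p \notin F ->
  connect (avoid_rel r F) g (last x p).
Proof.
elim: p x g => [|y p IH] x g gF hx /=.
  by case: hx => [-> | [xf _]] _; rewrite ?connect0 // xf fF.
case/andP=> /and3P[rxy _ yFf] hp lastF.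
have [yf | yf] := eqVneq y f.
  apply: IH gF _ hp lastF; right; split=> //.
  by case: hx => [<- | [_ //]]; rewrite -yf.
have yF : y \notin F by move: yFf; rewrite !inE yf.
apply: connect_trans (IH y y yF (or_introl erefl) hp lastF).
have gy : g = y \/ r g y.
  case: hx => [<- | [xf rgf]]; first by right.
  have [-> | neq] := eqVneq g y; [by left | right].
  by apply: nbhd_clique => //; rewrite r_sym -xf.
case: gy => [-> | rgy]; first exact: connect0.
by apply: connect1; rewrite /avoid_rel rgy gF yF.
Qed.

Lemma connect_avoid_setD1 (a b : T) : a \notin F -> b \notin F ->
  connect (avoid_rel r (F :\ f)) a b -> connect (avoid_rel r F) a b.
Proof.
move=> aF bF /connectP[p hp eb].
rewrite eb; apply: (avoid_path_bypass aF _ hp); [by left | by rewrite -eb].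
Qed.

End BypassClique.

Section LineGraph.
Variables (V : finType) (k : nat) (E : 'I_k -> rel V).

Lemma lg_adj_sym : symmetric (lg_adj E).
Proof.
move=> e g; rewrite /lg_adj setIC eq_sym.
by case: (e \in dg_edges E); case: (g \in dg_edges E).
Qed.

Lemma dg_edges_set2 (x y : V) : dg_adj E x y -> [set x; y] \in dg_edges E.
Proof.
by move=> xy; rewrite inE; apply/existsP; exists x; apply/existsP; exists y; rewrite xy eqxx.
Qed.

Lemma lg_adj_set2_notin_Inc (u z : V) (g : {set V}) :
  g \notin Inc E u -> lg_adj E g [set u; z] -> z \in g.
Proof.
move=> gI /and4P[gE _ _ /set0Pn[y]].
rewrite !inE => /andP[yg /orP[/eqP yu | /eqP <- //]].
by move: gI; rewrite inE gE -yu yg.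
Qed.

(* Any two edges meeting uz but avoiding u share z. *)
Lemma lg_adj_set2_clique (u z : V) (g h : {set V}) :
  g \notin Inc E u -> h \notin Inc E u ->
  lg_adj E g [set u; z] -> lg_adj E h [set u; z] -> g != h -> lg_adj E g h.
Proof.
move=> gI hI gf hf gh; move: (gf) (hf) => /and4P[gE _ _ _] /and4P[hE _ _ _].
rewrite /lg_adj gE hE gh; apply/set0Pn; exists z.
by rewrite inE (lg_adj_set2_notin_Inc gI gf) (lg_adj_set2_notin_Inc hI hf).
Qed.

Lemma lg_min_separator_setD1 (a b : {set V}) (F : {set {set V}}) (f : {set V}) :
  lg_min_separator_ab E a b F -> f \in F ->
  connect (avoid_rel (lg_adj E) (F :\ f)) a b.
Proof.
case=> [[sFE aF bF _] minF] fF; apply/negPn/negP => nc.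
apply: (minF (F :\ f)); first exact: properD1.
split=> //; first exact: subset_trans (subsetDl _ _) sFE.
- by rewrite !inE negb_and aF orbT.
- by rewrite !inE negb_and bF orbT.
Qed.

Lemma dg_adj_exists (Vt : 'I_k -> {set V}) (a : {set V}) (u : V) :
  is_profile Vt E -> dg_connected Vt E -> a \in dg_edges E ->
  u \in dg_vert Vt -> exists z, dg_adj E u z.
Proof.
move=> hP hconn; rewrite inE => /existsP[x /existsP[y /andP[/existsP[j xy] _]]] uV.
have [[_ irrE inVt _] _] := hP.1 j.
have /andP[xV yV] := inVt _ _ xy.
have [w wu wV] : exists2 w, w != u & w \in dg_vert Vt.
  have [xu | xu] := eqVneq x u; last by exists x => //; apply/bigcupP; exists j.
  exists y; last by apply/bigcupP; exists j.
  by apply: contraTneq xy => yu; rewrite yu xu irrE.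
case/connectP: (hconn u w uV wV) => [[|z p] /= hp wl].
  by move: wu; rewrite wl eqxx.
by exists z; case/andP: hp.
Qed.

End LineGraph.

Theorem lemma3 (V : finType) (k : nat) (Vt : 'I_k -> {set V}) (E : 'I_k -> rel V)
  (hP : is_profile Vt E) (hconn : dg_connected Vt E)
  (F : {set {set V}}) (hF : lg_min_separator E F)
  (i : 'I_k) (u : V) (hu : u \in Vt i) :
  ~~ (Inc E u \subset F).
Proof.
case: hF => a [b [aE _ _ _ sepF]]; apply/negP => IncF.
have [[_ aF bF ncF] _] := sepF.
have [z uz] : exists z, dg_adj E u z.
  by apply: dg_adj_exists hP hconn aE _; apply/bigcupP; exists i.
have fF : [set u; z] \in F.
  by apply: (subsetP IncF); rewrite inE dg_edges_set2 // !inE eqxx.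
have notInc g : g \notin F -> g \notin Inc E u.
  by apply: contra; apply: (subsetP IncF).
move/negP: ncF; apply.
apply: (connect_avoid_setD1 (@lg_adj_sym _ _ E) fF) => //.
- by move=> g h gF hF; apply: lg_adj_set2_clique; apply: notInc.
- exact: lg_min_separator_setD1 sepF fF.
Qed.
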